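(* Let $G$ be a connected graph, $k \ge 2$ an integer, and $\Pi_1, \Pi_2 \in \mathrm{Part}(G,k)$. Then there exists a block vertex $v \in V(G)$ such that a sequence of at most three recombination moves transforms $\Pi_1$ into a connected $k$-partition in which $\{v\}$ is a district, and a sequence of at most three recombination moves transforms $\Pi_2$ into a connected $k$-partition in which $\{v\}$ is a district.
   Context: For a graph $G$ and positive integer $k$, a connected $k$-partition of $G$ is a partition of $V(G)$ into $k$ disjoint nonempty sets $V_1,\dots,V_k$ (called districts) such that each induced subgraph $G[V_i]$ is connected; $\mathrm{Part}(G,k)$ denotes the set of all connected $k$-partitions of $G$. Two distinct connected $k$-partitions $\{V_1,\dots,V_k\}$ and $\{W_1,\dots,W_k\}$ are related by a recombination move if there are indices $i,j$ and a permutation $\pi$ of $\{1,\dots,k\}$ with $V_i \cup V_j = W_{\pi(i)} \cup W_{\pi(j)}$ and $V_\ell = W_{\pi(\ell)}$ for all $\ell \notin \{i,j\}$ (here there is no size restriction on districts). A block is a maximal biconnected component; a vertex is a cut vertex if it lies in two or more blocks, and a block vertex otherwise. *)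

From mathcomp Require Import all_boot.
Set Implicit Arguments. Unset Strict Implicit. Unset Printing Implicit Defensive.

Section Graphs.
Variables (T : finType) (e : rel T).

Definition simple_graph : Prop := symmetric e /\ irreflexive e.

Definition induced_rel (A : {set T}) : rel T :=
  [rel x y | [&& e x y, x \in A & y \in A]].

Definition connected_in (A : {set T}) : Prop :=
  A != set0 /\ forall x y, x \in A -> y \in A -> connect (induced_rel A) x y.

Definition connected_graph : Prop := connected_in [set: T].

(* G[B] is biconnected: connected and without a cut vertex of its own
   (K1 and K2 count as biconnected, as usual) *)
Definition biconnected (B : {set T}) : Prop :=
  connected_in B /\ forall x, x \in B -> B :\ x != set0 -> connected_in (B :\ x).

Definition is_block (B : {set T}) : Prop :=
  biconnected B /\ forall B' : {set T}, B \subset B' -> biconnected B' -> B' = B.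

Definition cut_vertex (v : T) : Prop :=
  exists B1 B2 : {set T}, [/\ is_block B1, is_block B2, B1 != B2, v \in B1 & v \in B2].

Definition block_vertex (v : T) : Prop := ~ cut_vertex v.

Definition conn_kpart (k : nat) (P : {set {set T}}) : Prop :=
  [/\ partition P [set: T], #|P| = k & forall A, A \in P -> connected_in A].

(* one recombination move (districts of P other than A, B are kept, A u B
   is re-split into C, D); the sets-of-sets representation absorbs the
   permutation pi *)
Definition recomb_move (k : nat) (P Q : {set {set T}}) : Prop :=
  [/\ conn_kpart k P, conn_kpart k Q, P != Q &
   exists A B C D : {set T}, [/\ [/\ A \in P, B \in P, C \in Q & D \in Q],
       A != B, C != D, A :|: B = C :|: D &
       (P :\ A) :\ B = (Q :\ C) :\ D]].

Fixpoint recomb_within (k n : nat) (P Q : {set {set T}}) : Prop :=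
  match n with
  | 0 => P = Q
  | n'.+1 => P = Q \/ exists R, recomb_move k P R /\ recomb_within k n' R Q
  end.

End Graphs.

From mathcomp Require Import all_boot.
Set Implicit Arguments. Unset Strict Implicit. Unset Printing Implicit Defensive.

(* Call h a 3-cut of a vertex set A when G[A - h] has at least three components.
   1. Non-separating vertices (nonseparating_component): a connected A with two
      or more vertices has vertices c, x such that A - u stays connected for
      every u in the component of x in G[A - c].  A vertex whose deletion keeps
      G connected lies in a single block (nonseparating_block_vertex).
   2. Isolation (isolate_vertex): if G - v is connected and v is not a 3-cut of
      its district A, two moves suffice: when A - v is connected, re-split A u B
      (B adjacent to A - v) into {v} and (A u B) - v; when A - v has two
      components, first hand one of them over to an adjacent district.
   3. Counting (cut3_count): in a connected A with two or more vertices,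
      #3-cuts + 2 <= #non-separating vertices, by induction deleting a
      non-separating vertex.  Applied inside every district to the vertices of
      a component U of G - c (district_count, partition_count), it shows that
      the 3-cuts lying in U are fewer than half of U.
   4. Hence the 3-cut sets of the two partitions do not cover U (sparse_pair);
      any vertex of U outside both is the required block vertex. *)

Section Connectivity.
Variables (T : finType) (e : rel T).
Hypothesis esym : symmetric e.
Notation ind := (induced_rel e).
Implicit Types (S Z W : {set T}) (x y : T).

Lemma indE S x y : ind S x y = [&& e x y, x \in S & y \in S].
Proof. by []. Qed.

Lemma ind_sym S : symmetric (ind S).
Proof. by move=> x y; rewrite !indE esym; case: (x \in S); case: (y \in S); rewrite ?andbF. Qed.

Lemma connect_ind_sym S x y : connect (ind S) x y = connect (ind S) y x.
Proof. exact: (sym_connect_sym (ind_sym S)). Qed.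

Lemma connect_ind_sub S S' x y :
  S \subset S' -> connect (ind S) x y -> connect (ind S') x y.
Proof.
move=> /subsetP sS; apply: connect_sub => p q /and3P[epq pS qS].
by apply: connect1; rewrite indE epq !sS.
Qed.

Lemma connect_ind_mem S x y : connect (ind S) x y -> x \in S -> y \in S.
Proof.
move=> /connectP[p + ->]; elim: p x => [|z p IH] x //= /andP[/and3P[_ _ zS] pth] _.
exact: IH.
Qed.

Lemma edge_across S W x y : connect (ind S) x y -> x \in W -> y \notin W ->
  exists p q, [/\ p \in W, q \notin W & ind S p q].
Proof.
move=> /connectP[p + ->]; elim: p x => [|z p IH] x /=; first by move=> _ ->.
case/andP=> exz pth xW yW; case: (boolP (z \in W)) => zW; first exact: (IH z pth zW yW).
by exists x, z.
Qed.

Lemma connect_ind_restrict S Z x y :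
  (forall p q, p \in Z -> ind S p q -> q \in Z) ->
  connect (ind S) x y -> x \in Z -> connect (ind Z) x y.
Proof.
move=> closedZ /connectP[p + ->]; elim: p x => [|z p IH] x /=; first by [].
case/andP=> exz pth xZ; have zZ := closedZ _ _ xZ exz.
apply: connect_trans (IH _ pth zZ); apply: connect1.
by move: exz; rewrite !indE xZ zZ => /and3P[-> _ _].
Qed.

Definition component S x : {set T} := [set y in S | connect (ind S) x y].

Lemma component_closed S x p q :
  p \in component S x -> ind S p q -> q \in component S x.
Proof.
rewrite !inE => /andP[_ xp] pq; move: (pq); rewrite indE => /and3P[_ _ ->].
exact: connect_trans xp (connect1 pq).
Qed.

Lemma component_connect S x y :
  x \in S -> y \in component S x -> connect (ind (component S x)) x y.
Proof.
move=> xS; rewrite inE => /andP[_ xy]; apply: connect_ind_restrict xy _.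
  exact: component_closed.
by rewrite inE xS connect0.
Qed.

Lemma component_exit S Z w y : Z \subset S -> connect (ind S) w y -> w \in Z ->
  ~~ connect (ind Z) w y ->
  exists p q, [/\ connect (ind Z) w p, q \in S :\: Z & e p q].
Proof.
move=> ZS wy wZ nwy; pose W := component Z w.
have wW : w \in W by rewrite inE wZ connect0.
have yW : y \notin W by rewrite inE negb_and nwy orbT.
have [p [q [pW qW pq]]] := edge_across wy wW yW.
have [epq _ qS] := and3P pq.
have := pW; rewrite inE => /andP[pZ wp].
exists p, q; split=> //; rewrite inE qS andbT; apply: contra qW => qZ.
by apply: component_closed pW _; rewrite indE epq pZ qZ.
Qed.

(* Boolean connectedness of G[S] (true for the empty set). *)
Definition connb S : bool := [forall x in S, forall y in S, connect (ind S) x y].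

Lemma connbP S :
  reflect (forall x y, x \in S -> y \in S -> connect (ind S) x y) (connb S).
Proof.
apply: (iffP forall_inP) => [H x y xS yS | H x xS].
  by have /forall_inP := H x xS; apply.
by apply/forall_inP => y yS; apply: H.
Qed.

Lemma connected_connb S : connected_in e S -> connb S.
Proof. by case=> _ /connbP. Qed.

Lemma connb_connected S : S != set0 -> connb S -> connected_in e S.
Proof. by move=> ne /connbP. Qed.

Lemma connb_star S h :
  h \in S -> (forall y, y \in S -> connect (ind S) y h) -> connb S.
Proof.
move=> hS H; apply/connbP => y z yS zS.
by apply: connect_trans (H y yS) _; rewrite connect_ind_sym; apply: H.
Qed.

Lemma connb_component S x : x \in S -> connb (component S x).
Proof.
move=> xS; apply: (connb_star (h := x)) => [|y yK]; first by rewrite inE xS connect0.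
by rewrite connect_ind_sym; apply: component_connect.
Qed.

Lemma connb_small S : #|S| <= 1 -> connb S.
Proof.
by move=> cS; apply/connbP => x y xS yS; rewrite (card_le1_eqP cS x y xS yS).
Qed.

Lemma connected_set1 x : connected_in e [set x].
Proof.
apply: connb_connected; first by apply/set0Pn; exists x; rewrite inE.
by apply: connb_small; rewrite cards1.
Qed.

Lemma connb_union_edge X Y p q : connb X -> connb Y -> p \in X -> q \in Y ->
  e p q -> connb (X :|: Y).
Proof.
move=> /connbP cX /connbP cY pX qY epq.
apply: (connb_star (h := p)) => [|y]; first by rewrite inE pX.
rewrite inE => /orP[yX|yY].
  by apply: connect_ind_sub (cX y p yX pX); apply: subsetUl.
apply: connect_trans (connect_ind_sub (subsetUr X Y) (cY y q yY qY)) _.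
by apply: connect1; rewrite indE esym epq !inE pX qY orbT.
Qed.

End Connectivity.

Section NonSeparating.
Variables (T : finType) (e : rel T).
Hypothesis esym : symmetric e.
Notation ind := (induced_rel e).
Notation component := (component e).
Notation connb := (connb e).
Implicit Types (A : {set T}) (c x u w : T).

Lemma component_shrink A c x u w : connb A -> c \in A ->
  u \in component (A :\ c) x -> w \in A :\ u -> ~~ connect (ind (A :\ u)) c w ->
  component (A :\ u) w \proper component (A :\ c) x.
Proof.
move=> /connbP cA cA' uK wAu ncw.
set K' := component (A :\ u) w; set K := component (A :\ c) x.
have := uK; rewrite inE => /andP[uAc xu].
have wK' : w \in K' by rewrite inE wAu connect0.
have cK' : c \notin K' by rewrite inE connect_ind_sym // (negbTE ncw) andbF.
have K'sub : K' \subset A :\ c.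
  apply/subsetP => t tK'; have := tK'; rewrite !inE => /andP[/andP[_ ->] _].
  by rewrite andbT; apply: contraNneq cK' => <-.
have wA : w \in A by move: wAu; rewrite inE => /andP[].
have [p [q [pK' qK' pq]]] := edge_across (cA w c wA cA') wK' cK'.
have [epq pA qA] := and3P pq.
have pAu : p \in A :\ u by move: pK'; rewrite inE => /andP[].
have qu : q = u.
  apply/eqP; apply: contraNT qK' => qu; apply: component_closed pK' _.
  by rewrite indE epq pAu !inE qu qA.
subst q.
have pAc : p \in A :\ c by apply: (subsetP K'sub).
have wK'c : forall t, t \in K' -> connect (ind (A :\ c)) w t.
  by move=> t tK'; apply: (connect_ind_sub K'sub); apply: component_connect.
have xw : connect (ind (A :\ c)) x w.
  apply: connect_trans xu (connect_trans (connect1 (_ : ind (A :\ c) u p)) _).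
    by rewrite indE esym epq uAc pAc.
  by rewrite connect_ind_sym //; apply: wK'c.
rewrite properE; apply/andP; split.
  apply/subsetP => t tK'; rewrite inE (subsetP K'sub _ tK').
  exact: connect_trans xw (wK'c t tK').
apply/subsetPn; exists u; first by rewrite inE uAc.
by rewrite !inE eqxx.
Qed.

(* In a connected A with at least two vertices there are c and x such that
   removing any vertex u of the component of x in G[A - c] keeps G[A] connected
   (choose (c, x) minimising the size of that component). *)
Lemma nonseparating_component A : connb A -> 1 < #|A| ->
  exists c x, [/\ c \in A, x \in A :\ c &
    forall u, u \in component (A :\ c) x -> connb (A :\ u)].
Proof.
move=> cA /card_gt1P[x0 [y0 [x0A y0A nxy]]].
pose admissible (p : T * T) := (p.1 \in A) && (p.2 \in A :\ p.1).
have adm0 : admissible (x0, y0) by rewrite /admissible /= x0A !inE y0A eq_sym nxy.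
case: (arg_minnP (fun p => #|component (A :\ p.1) p.2|) adm0) => [[c x]].
move=> /andP[/= cA' xAc] minK; exists c, x; split=> // u uK.
have uAc : u \in A :\ c by move: uK; rewrite inE => /andP[].
have [uc _] := setD1P uAc.
have cAu : c \in A :\ u by rewrite !inE cA' andbT eq_sym.
apply: (connb_star esym (h := c)) => // w wAu; rewrite connect_ind_sym //.
apply: contraT => ncw; have shrink := component_shrink cA cA' uK wAu ncw.
have admw : admissible (u, w) by rewrite /admissible /= wAu andbT; case/setD1P: uAc.
by have := minK _ admw; rewrite leqNgt (proper_card shrink).
Qed.

End NonSeparating.

Section Paths.
Variables (T : finType) (e : rel T).
Hypothesis esym : symmetric e.
Notation ind := (induced_rel e).
Implicit Types (Z : {set T}) (a x y : T) (p : seq T).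

Lemma path_ind_mem Z a p : path (ind Z) a p -> a \in Z -> {subset a :: p <= Z}.
Proof.
elim: p a => [|z p IH] a /=; first by move=> _ aZ y; rewrite inE => /eqP->.
case/andP=> /and3P[_ _ zZ] pth aZ y; rewrite inE => /orP[/eqP->//|].
exact: IH.
Qed.

Lemma path_ind_sub Z Z' a p :
  path (ind Z) a p -> {subset a :: p <= Z'} -> path (ind Z') a p.
Proof.
move=> pth sub; apply: (sub_in_path (P := mem Z')) pth; last by apply/allP.
by move=> x y xZ' yZ' /and3P[exy _ _]; rewrite indE exy xZ' yZ'.
Qed.

Lemma path_split_at Z x a p y : path (ind Z) a p -> uniq (a :: p) -> a \in Z ->
  y \in a :: p -> y != x ->
  connect (ind (Z :\ x)) y a || connect (ind (Z :\ x)) y (last a p).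
Proof.
elim: p a => [|z p IH] a /=.
  by move=> _ _ _; rewrite inE => /eqP-> _; rewrite connect0.
case/andP=> az pth /andP[anz un] aZ; rewrite inE => /orP[/eqP-> _|yzp yx].
  by rewrite connect0.
have [ezz' _ zZ] := and3P az.
case/orP: (IH z pth un zZ yzp yx) => [yz|->]; last by rewrite orbT.
have yZx : y \in Z :\ x by rewrite !inE yx (path_ind_mem pth zZ yzp).
have zx : z != x by have := connect_ind_mem yz yZx; rewrite !inE => /andP[].
case: (eqVneq a x) => [ax|ax].
  (* the rest of the path after a = x avoids x *)
  rewrite {}ax in anz *; apply/orP; right; apply: connect_trans yz _.
  have sub : {subset z :: p <= Z :\ x}.
    move=> t tp; rewrite !inE (path_ind_mem pth zZ tp) andbT.
    by apply: contraNneq anz => <-.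
  by apply: (path_connect (path_ind_sub pth sub)); apply: mem_last.
apply/orP; left; apply: connect_trans yz (connect1 _).
by rewrite indE esym ezz' !inE zx ax zZ aZ.
Qed.

End Paths.

Section TwoBlocks.
Variables (T : finType) (e : rel T).
Hypothesis esym : symmetric e.
Notation ind := (induced_rel e).
Notation connb := (connb e).

Lemma biconnected_connect (B : {set T}) x y z : biconnected e B ->
  y \in B :\ x -> z \in B :\ x -> connect (ind (B :\ x)) y z.
Proof.
move=> [cB bcB] yB zB; case: (boolP (x \in B)) => xB.
  have ne : B :\ x != set0 by apply/set0Pn; exists y.
  by apply: (connbP _ _ (connected_connb (bcB x xB ne))).
have BBx : B \subset B :\ x.
  by apply/subsetP => t tB; rewrite !inE tB andbT; apply: contraNneq xB => <-.
apply: connect_ind_sub BBx _; apply: (connbP _ _ (connected_connb cB)).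
  by case/setD1P: yB.
by case/setD1P: zB.
Qed.

(* Two distinct blocks B1, B2 through v, joined by a simple path from
   a in B1 to b in B2 avoiding v, would span a larger biconnected set S. *)
Variables (B1 B2 : {set T}) (v a b : T) (p : seq T).
Hypotheses (bc1 : biconnected e B1) (bc2 : biconnected e B2).
Hypotheses (vB1 : v \in B1) (vB2 : v \in B2) (aB1 : a \in B1) (bB2 : b \in B2).
Hypotheses (av : a != v) (bv : b != v).
Hypotheses (pth : path (ind ([set: T] :\ v)) a p) (uniqp : uniq (a :: p)).
Hypothesis lastp : last a p = b.

Let S : {set T} := B1 :|: B2 :|: [set y | y \in a :: p].

Let B1S : B1 \subset S. Proof. by apply/subsetP => y yB; rewrite !inE yB. Qed.
Let B2S : B2 \subset S. Proof. by apply/subsetP => y yB; rewrite !inE yB orbT. Qed.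

Let path_Sv : {subset a :: p <= S :\ v}.
Proof.
have aT : a \in [set: T] :\ v by rewrite !inE av.
move=> y yp; have := path_ind_mem pth aT yp; rewrite !inE andbT => yv.
by rewrite yv -in_cons yp orbT.
Qed.

Let pathS : path (ind (S :\ v)) a p. Proof. exact: path_ind_sub pth path_Sv. Qed.

Let aSv : a \in S :\ v. Proof. by apply: path_Sv; rewrite inE eqxx. Qed.

Let block_reach (B : {set T}) x y : biconnected e B -> v \in B -> B \subset S ->
  y \in B -> y != x -> x != v -> connect (ind (S :\ x)) y v.
Proof.
move=> bB vB BS yB yx xv; apply: (connect_ind_sub (S := B :\ x)).
  by apply/subsetP => t /setD1P[tx tB]; rewrite in_setD1 tx (subsetP BS _ tB).
by apply: biconnected_connect; rewrite // !inE ?yx ?yB // eq_sym xv.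
Qed.

Let reached_end x y z : y \in a :: p -> y != x ->
  connect (ind (S :\ v :\ x)) y z -> z != x.
Proof.
move=> yp yx yz; have yS : y \in S :\ v :\ x by rewrite in_setD1 yx path_Sv.
by have /setD1P[] := connect_ind_mem yz yS.
Qed.

Let S_minus_other x : x \in S -> x != v -> connb (S :\ x).
Proof.
move=> xS xv; apply: (connb_star esym (h := v)); first by rewrite !inE eq_sym xv vB1.
move=> y /setD1P[yx]; rewrite /S !in_setU in_set -orbA => /or3P[yB|yB|yp].
- exact: block_reach bc1 vB1 B1S yB yx xv.
- exact: block_reach bc2 vB2 B2S yB yx xv.
have SvxSx : S :\ v :\ x \subset S :\ x.
  by apply/subsetP => t; rewrite !in_setD1 => /and3P[-> _ ->].
have := path_split_at esym pathS uniqp aSv yp yx; rewrite lastp => /orP[yend|yend].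
  apply: connect_trans (connect_ind_sub SvxSx yend) _.
  exact: block_reach bc1 vB1 B1S aB1 (reached_end yp yx yend) xv.
apply: connect_trans (connect_ind_sub SvxSx yend) _.
exact: block_reach bc2 vB2 B2S bB2 (reached_end yp yx yend) xv.
Qed.

Let S_minus_v : connb (S :\ v).
Proof.
have from_a : forall y, y \in a :: p -> connect (ind (S :\ v)) y a.
  by move=> y yp; rewrite connect_ind_sym //; apply: (path_connect pathS).
apply: (connb_star esym aSv) => y /setD1P[yv].
rewrite /S !in_setU in_set -orbA => /or3P[yB|yB|yp].
- apply: (connect_ind_sub (S := B1 :\ v)).
    by apply/subsetP => t /setD1P[tv tB]; rewrite in_setD1 tv (subsetP B1S _ tB).
  by apply: biconnected_connect; rewrite // !inE ?yv ?yB ?av.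
- apply: connect_trans (_ : connect _ y b) (from_a b _); last by rewrite -lastp mem_last.
  apply: (connect_ind_sub (S := B2 :\ v)).
    by apply/subsetP => t /setD1P[tv tB]; rewrite in_setD1 tv (subsetP B2S _ tB).
  by apply: biconnected_connect; rewrite // !inE ?yv ?yB ?bv.
- exact: from_a.
Qed.

Lemma two_blocks_span : biconnected e S.
Proof.
have SvS : S :\ v \subset S by apply: subsetDl.
split.
  apply: connb_connected; first by apply/set0Pn; exists v; rewrite !inE vB1.
  apply: (connb_star esym (h := a)) => [|y yS]; first by rewrite !inE aB1.
  case: (eqVneq y v) => [->|yv].
    apply: (connect_ind_sub B1S); apply: (connbP _ _ (connected_connb bc1.1)) => //.
  have ySv : y \in S :\ v by rewrite in_setD1 yv yS.
  exact: connect_ind_sub SvS (connbP _ _ S_minus_v y a ySv aSv).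
move=> x xS ne; apply: connb_connected => //.
by case: (eqVneq x v) => [->|xv]; [exact: S_minus_v | exact: S_minus_other].
Qed.

End TwoBlocks.

Section BlockVertex.
Variables (T : finType) (e : rel T).
Hypothesis esym : symmetric e.

Lemma block_not_sub (B B' : {set T}) : biconnected e B -> is_block e B' ->
  B != B' -> exists2 y, y \in B' & y \notin B.
Proof.
move=> bB [_ maxB'] nBB'; case: (boolP (B' \subset B)) => [sB'B|/subsetPn//].
by move: nBB'; rewrite (maxB' _ sB'B bB) eqxx.
Qed.

(* A vertex whose deletion leaves G connected lies in only one block: two
   blocks through v could be merged along a path avoiding v. *)
Lemma nonseparating_block_vertex v : connb e ([set: T] :\ v) -> block_vertex e v.
Proof.
move=> cG [B1 [B2 [bl1 bl2 n12 vB1 vB2]]].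
have [b bB2 bB1] := block_not_sub bl1.1 bl2 n12.
have n21 : B2 != B1 by rewrite eq_sym.
have [a aB1 aB2] := block_not_sub bl2.1 bl1 n21.
have av : a != v by apply: contraNneq aB2 => ->.
have bv : b != v by apply: contraNneq bB1 => ->.
have aT : a \in [set: T] :\ v by rewrite !inE av.
have bT : b \in [set: T] :\ v by rewrite !inE bv.
have [p0 pth0 lastp0] := connectP (connbP _ _ cG a b aT bT).
move: lastp0; case/shortenP: pth0 => p pth uniqp _ blast.
have lastp : last a p = b by rewrite blast.
have span := two_blocks_span esym bl1.1 bl2.1 vB1 vB2 aB1 bB2 av bv pth uniqp lastp.
have sub : B1 \subset B1 :|: B2 :|: [set y in a :: p] by rewrite -setUA subsetUl.
by move: bB1; rewrite -(bl1.2 _ sub span) !inE bB2 orbT.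
Qed.

End BlockVertex.

Section Resplit.
Variable T : finType.
Implicit Types (P : {set {set T}}) (A B C D X : {set T}).

Lemma partition_notin P X B : partition P X -> B != set0 -> [disjoint B & X] ->
  B \notin P.
Proof.
move=> partP /set0Pn[x xB] dBX; apply/negP => BP.
by have := subsetP (partitionS partP BP) x xB; rewrite (disjointFr dBX xB).
Qed.

Section Resplitting.
Variables (P : {set {set T}}) (A B C D : {set T}).
Hypotheses (partP : partition P [set: T]) (AP : A \in P) (BP : B \in P).
Hypotheses (nAB : A != B) (neC : C != set0) (neD : D != set0).
Hypotheses (dCD : [disjoint C & D]) (CD : C :|: D = A :|: B).

Let R := P :\ A :\ B.
Let partR : partition R ([set: T] :\: A :\: B).
Proof. by apply: partitionD1; [apply: partitionD1 | rewrite !inE eq_sym nAB]. Qed.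

Let disj_rest (Y : {set T}) : Y \subset A :|: B -> [disjoint Y & [set: T] :\: A :\: B].
Proof.
move=> YAB; rewrite -setI_eq0 -subset0; apply/subsetP => y; rewrite !inE.
by case/andP=> /(subsetP YAB); rewrite !inE => /orP[]->; rewrite ?andbF.
Qed.

Let CAB : C \subset A :|: B. Proof. by rewrite -CD subsetUl. Qed.
Let DAB : D \subset A :|: B. Proof. by rewrite -CD subsetUr. Qed.

Let partDR : partition (D |: R) (D :|: ([set: T] :\: A :\: B)).
Proof. exact: partitionU1 partR neD (disj_rest DAB). Qed.

Let disjC : [disjoint C & D :|: ([set: T] :\: A :\: B)].
Proof.
have /eqP CD0 : C :&: D == set0 by rewrite setI_eq0.
have /eqP CR0 : C :&: ([set: T] :\: A :\: B) == set0 by rewrite setI_eq0 disj_rest.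
by rewrite -setI_eq0 setIUr CD0 CR0 setU0.
Qed.

Lemma resplit_partition : partition (C |: (D |: R)) [set: T].
Proof.
have -> : [set: T] = C :|: (D :|: ([set: T] :\: A :\: B)).
  apply/setP => x; rewrite setUA CD !inE.
  by case: (x \in A); case: (x \in B).
exact: partitionU1 partDR neC disjC.
Qed.

Lemma resplit_notin : [/\ C \notin D |: R, D \notin R & C \notin R].
Proof.
have CR := partition_notin partR neC (disj_rest CAB).
by rewrite (partition_notin partDR neC disjC) (partition_notin partR neD (disj_rest DAB)).
Qed.

Lemma resplit_card : #|C |: (D |: R)| = #|P|.
Proof.
have [CDR DR _] := resplit_notin.
rewrite !cardsU1 CDR DR (cardsD1 A P) AP (cardsD1 B (P :\ A)).
by rewrite !inE eq_sym nAB BP.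
Qed.

Lemma resplit_rest : (C |: (D |: R)) :\ C :\ D = R.
Proof. by have [CDR DR _] := resplit_notin; rewrite !setU1K. Qed.

End Resplitting.
End Resplit.

Section Moves.
Variables (T : finType) (e : rel T).
Hypothesis esym : symmetric e.
Notation ind := (induced_rel e).
Notation connb := (connb e).
Notation component := (component e).
Implicit Types (P Q : {set {set T}}) (A B C D K : {set T}) (v x y : T).

Lemma resplit_move k P A B C D : conn_kpart e k P -> A \in P -> B \in P -> A != B ->
  connected_in e C -> connected_in e D -> [disjoint C & D] -> C :|: D = A :|: B ->
  C != A -> C != B -> recomb_move e k P (C |: (D |: (P :\ A :\ B))).
Proof.
move=> [partP cardP connP] AP BP nAB cC cD dCD CD nCA nCB.
have [neC neD] : C != set0 /\ D != set0 by case: cC; case: cD.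
have [CDR DR CR] := resplit_notin partP AP BP nAB neC neD dCD CD.
have nCD : C != D.
  by apply: contraNneq neC => eCD; rewrite -setI_eq0 -[X in _ :&: X]eCD setIid in dCD.
have kQ : conn_kpart e k (C |: (D |: (P :\ A :\ B))).
  split; [exact: resplit_partition | by rewrite resplit_card |].
  by move=> X; rewrite !inE => /or3P[/eqP->|/eqP->|/and3P[_ _ /connP]].
split=> //.
  apply: contraNneq CR => PQ; rewrite !inE nCA nCB PQ.
  by rewrite !inE eqxx.
exists A, B, C, D; split=> //; first by rewrite !inE !eqxx ?orbT.
by rewrite resplit_rest.
Qed.

Lemma pblock_district P x : partition P [set: T] -> pblock P x \in P.
Proof. by move=> partP; rewrite pblock_mem // (cover_partition partP). Qed.

Lemma mem_pblock_district P x : partition P [set: T] -> x \in pblock P x.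
Proof. by move=> partP; rewrite mem_pblock (cover_partition partP). Qed.

Lemma district_eq P A B x : partition P [set: T] -> A \in P -> B \in P ->
  x \in A -> x \in B -> A = B.
Proof.
move=> partP AP BP xA xB; have tP := partition_trivIset partP.
by rewrite -(def_pblock tP AP xA) (def_pblock tP BP xB).
Qed.

Lemma exists_outside k P A : conn_kpart e k P -> 2 <= k -> A \in P ->
  exists y, y \notin A.
Proof.
move=> [partP cardP _] k2 AP.
have : 0 < #|P :\ A| by move: k2; rewrite -cardP (cardsD1 A P) AP.
rewrite card_gt0 => /set0Pn[B /setD1P[BA BP]].
have /set0Pn[y yB] := partition_neq0 partP BP.
by exists y; apply: contra BA => yA; rewrite (district_eq partP BP AP yB yA).
Qed.

Lemma adjacent_district k P A v K : conn_kpart e k P -> 2 <= k -> A \in P ->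
  v \in A -> connb ([set: T] :\ v) -> K \subset A :\ v -> K != set0 ->
  (forall p q, p \in K -> ind (A :\ v) p q -> q \in K) ->
  exists B p q, [/\ B \in P, [disjoint A & B], p \in K, q \in B & e p q].
Proof.
move=> kP k2 AP vA cG KA /set0Pn[x xK] closedK.
have [partP _ _] := kP.
have [y yA] := exists_outside kP k2 AP.
have xAv := subsetP KA x xK.
have xT : x \in [set: T] :\ v by rewrite !inE andbT; case/setD1P: xAv.
have yT : y \in [set: T] :\ v by rewrite !inE andbT; apply: contraNneq yA => ->.
have yK : y \notin K by apply: contra yA => /(subsetP KA)/setD1P[].
have [p [q [pK qK pq]]] := edge_across (connbP _ _ cG x y xT yT) xK yK.
have [epq _ qT] := and3P pq.
have qA : q \notin A.
  apply: contra qK => qA; apply: (closedK p q pK).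
  by rewrite indE epq (subsetP KA p pK) in_setD1 qA andbT; case/setD1P: qT.
exists (pblock P q), p, q; split=> //; rewrite ?pblock_district ?mem_pblock_district //.
rewrite -setI_eq0; apply/eqP/setP => t; rewrite !inE; apply/negbTE/andP => -[tA tq].
by move: qA; rewrite (district_eq partP AP (pblock_district _ partP) tA tq) mem_pblock_district.
Qed.

(* Isolating v in one move: when A - v is connected, re-split A u B (B a
   district adjacent to A - v) into {v} and (A u B) - v. *)
Lemma isolate_one_move k P A v : conn_kpart e k P -> 2 <= k -> A \in P -> v \in A ->
  A :\ v != set0 -> connb (A :\ v) -> connb ([set: T] :\ v) ->
  exists Q, recomb_move e k P Q /\ [set v] \in Q.
Proof.
move=> kP k2 AP vA neA cA cG.
have closedA : forall p q, p \in A :\ v -> ind (A :\ v) p q -> q \in A :\ v.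
  by move=> p q _ /and3P[].
have [B [p [q [BP dAB pA qB epq]]]] :=
  adjacent_district kP k2 AP vA cG (subxx _) neA closedA.
have vB : v \notin B by rewrite (disjointFr dAB vA).
have nAB : A != B by apply: contraNneq vB => <-.
have cB : connected_in e B by case: kP => _ _; apply.
have cD : connected_in e (A :\ v :|: B).
  apply: connb_connected; first by apply/set0Pn; exists p; rewrite inE pA.
  exact: (connb_union_edge esym cA (connected_connb cB) pA qB epq).
have dvD : [disjoint [set v] & A :\ v :|: B].
  by rewrite disjoints1 !inE eqxx (negbTE vB).
have vD : [set v] :|: (A :\ v :|: B) = A :|: B by rewrite setUA setD1K.
have nvA : [set v] != A by apply: contraNneq neA => <-; rewrite setDv.
have nvB : [set v] != B by apply: contraNneq vB => <-; rewrite inE.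
have mv := resplit_move kP AP BP nAB (connected_set1 e v) cD dvD vD nvA nvB.
by eexists; split; [exact: mv | rewrite setU11].
Qed.

(* Handing the component K of x in G[A - v] over to an adjacent district is one
   recombination move; it leaves v in the district A - K. *)
Lemma peel_component k P A v x : conn_kpart e k P -> 2 <= k -> A \in P ->
  v \in A -> x \in A :\ v -> connb ([set: T] :\ v) ->
  exists Q, recomb_move e k P Q /\ A :\: component (A :\ v) x \in Q.
Proof.
move=> kP k2 AP vA xAv cG.
have cP : forall X, X \in P -> connected_in e X by case: kP.
set K := component (A :\ v) x.
have KA : K \subset A :\ v by apply/subsetP => t; rewrite inE => /andP[].
have xK : x \in K by rewrite inE xAv connect0.
have neK : K != set0 by apply/set0Pn; exists x.
have [B [p [q [BP dAB pK qB epq]]]] :=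
  adjacent_district kP k2 AP vA cG KA neK (@component_closed _ _ _ x).
have vB : v \notin B by rewrite (disjointFr dAB vA).
have nAB : A != B by apply: contraNneq vB => <-.
have vK : v \notin K by apply/negP => /(subsetP KA); rewrite !inE eqxx.
have vC : v \in A :\: K by rewrite inE vK vA.
have cC : connected_in e (A :\: K).
  apply: connb_connected; first by apply/set0Pn; exists v.
  apply: (connb_star esym vC) => z zC; apply: contraT => nzv.
  have zA : z \in A by case/setDP: zC.
  have [p' [q' [zp' q'K ep'q']]] := component_exit (subsetDl A K)
    (connbP _ _ (connected_connb (cP A AP)) z v zA vA) zC nzv.
  have p'C := connect_ind_mem zp' zC.
  have p'v : p' != v by apply: contraNneq nzv => <-.
  have q'K' : q' \in K by move: q'K; rewrite !inE negb_and negbK => /andP[/orP[]// /negP].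
  have : p' \in K.
    apply: (component_closed q'K'); rewrite indE esym ep'q' (subsetP KA _ q'K').
    by rewrite in_setD1 p'v; case/setDP: p'C.
  by case/setDP: p'C => _ /negP.
have cD : connected_in e (B :|: K).
  apply: connb_connected; first by apply/set0Pn; exists q; rewrite inE qB.
  have eqp : e q p by rewrite esym.
  exact: (connb_union_edge esym (connected_connb (cP B BP)) (connb_component esym xAv) qB pK eqp).
have dCD : [disjoint A :\: K & B :|: K].
  rewrite -setI_eq0 -subset0; apply/subsetP => t; rewrite !inE.
  by case/andP=> /andP[tK tA] /orP[tB|]; [rewrite (disjointFr dAB tA) in tB | rewrite (negbTE tK)].
have CD : (A :\: K) :|: (B :|: K) = A :|: B.
  apply/setP => t; rewrite !in_setU in_setD.
  case: (boolP (t \in K)) => tK /=; last by rewrite orbF.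
  by have /setD1P[_ ->] := subsetP KA t tK; rewrite !orbT.
have nCA : A :\: K != A.
  by apply/eqP => CA; move: (subsetP KA x xK); rewrite -CA in_setD1 in_setD xK /= andbF.
have nCB : A :\: K != B by apply: contraNneq vB => <-.
have mv := resplit_move kP AP BP nAB cC cD dCD CD nCA nCB.
by eexists; split; [exact: mv | rewrite setU11].
Qed.

End Moves.

Section ThreeCuts.
Variables (T : finType) (e : rel T).
Hypothesis esym : symmetric e.
Notation ind := (induced_rel e).
Notation connb := (connb e).
Notation component := (component e).
Implicit Types (A : {set T}) (h r u v x : T).

Definition cut3 A h : bool :=
  [exists x in A :\ h, exists y in A :\ h, exists z in A :\ h,
    [&& ~~ connect (ind (A :\ h)) x y, ~~ connect (ind (A :\ h)) y z
      & ~~ connect (ind (A :\ h)) x z]].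

Lemma cut3P A h : reflect
  (exists x y z, [/\ [/\ x \in A :\ h, y \in A :\ h & z \in A :\ h],
     ~~ connect (ind (A :\ h)) x y, ~~ connect (ind (A :\ h)) y z
   & ~~ connect (ind (A :\ h)) x z])
  (cut3 A h).
Proof.
apply: (iffP idP) => [|[x [y [z [[xA yA zA] nxy nyz nxz]]]]].
  case/exists_inP=> x xA /exists_inP[y yA /exists_inP[z zA /and3P[nxy nyz nxz]]].
  by exists x, y, z.
apply/exists_inP; exists x => //; apply/exists_inP; exists y => //.
by apply/exists_inP; exists z => //; apply/and3P.
Qed.

Lemma cut3_not_connb A h : cut3 A h -> ~~ connb (A :\ h).
Proof.
case/cut3P=> x [y [_ [[xA yA _] nxy _ _]]].
by apply: contra nxy => /connbP; apply.
Qed.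

Lemma cut3_card A h : cut3 A h -> 1 < #|A|.
Proof.
case/cut3P=> x [y [_ [[/setD1P[_ xA] /setD1P[_ yA] _] nxy _ _]]].
apply/card_gt1P; exists x, y; split=> //.
by apply: contraNneq nxy => ->; apply: connect0.
Qed.

(* Deleting one more vertex r cannot reconnect three components. *)
Lemma cut3_delete A r h : cut3 A h -> ~~ connb (A :\ r :\ h).
Proof.
case/cut3P=> x [y [z [[xA yA zA] nxy nyz nxz]]]; apply/connbP => cA'.
have sub : A :\ r :\ h \subset A :\ h.
  by apply/subsetP => t; rewrite !in_setD1 => /and3P[-> _ ->].
have linked s t : s \in A :\ h -> t \in A :\ h -> s != r -> t != r ->
    connect (ind (A :\ h)) s t.
  move=> /setD1P[sh sA] /setD1P[th tA] sr tr.
  by apply: connect_ind_sub sub (cA' s t _ _); rewrite !in_setD1 ?sh ?th ?sr ?tr.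
have [xr|xr] := eqVneq x r.
  have [yr|yr] := eqVneq y r; first by rewrite xr yr connect0 in nxy.
  have [zr|zr] := eqVneq z r; first by rewrite xr zr connect0 in nxz.
  by rewrite linked in nyz.
have [yr|yr] := eqVneq y r.
  have [zr|zr] := eqVneq z r; first by rewrite yr zr connect0 in nyz.
  by rewrite linked in nxz.
by rewrite linked in nxy.
Qed.

Lemma retract_cut3 A A' u (f : T -> T) : A' \subset A ->
  (forall w, w \in A :\ u -> f w \in A' :\ u /\ connect (ind (A :\ u)) w (f w)) ->
  (cut3 A u -> cut3 A' u) /\ (connb (A' :\ u) -> connb (A :\ u)).
Proof.
move=> sA fP.
have sub : A' :\ u \subset A :\ u.
  by apply/subsetP => t /setD1P[tu tA']; rewrite in_setD1 tu (subsetP sA).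
have back s t : s \in A :\ u -> t \in A :\ u ->
    connect (ind (A' :\ u)) (f s) (f t) -> connect (ind (A :\ u)) s t.
  move=> sAu tAu c; apply: connect_trans (fP s sAu).2 _.
  apply: connect_trans (connect_ind_sub sub c) _.
  by rewrite connect_ind_sym //; exact: (fP t tAu).2.
split.
  case/cut3P=> x [y [z [[xA yA zA] nxy nyz nxz]]]; apply/cut3P.
  exists (f x), (f y), (f z); split; first by split; apply: (fP _ _).1.
  - by apply: contra nxy; apply: back.
  - by apply: contra nyz; apply: back.
  - by apply: contra nxz; apply: back.
move/connbP => cA'; apply/connbP => s t sAu tAu.
by apply: back => //; apply: cA'; [exact: (fP s sAu).1 | exact: (fP t tAu).1].
Qed.

Lemma noncut3_rest A v x : ~~ cut3 A v -> x \in A :\ v ->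
  connb (A :\ v :\: component (A :\ v) x).
Proof.
move=> /cut3P ncut; move: ncut; set S := A :\ v => ncut xS; clearbody S.
set K := component S x.
have memK y : (y \in S :\: K) = (y \in S) && ~~ connect (ind S) x y.
  by rewrite /K in_setD inE; case: (y \in S); rewrite ?andbT.
apply/connbP => s t; rewrite !memK => /andP[sS nxs] /andP[tS nxt].
have st : connect (ind S) s t.
  by apply: contraT => nst; exfalso; apply: ncut; exists x, s, t.
apply: connect_ind_restrict st _; last by rewrite memK sS.
move=> p q; rewrite !memK => /andP[_ nxp] pq; have [_ _ qS] := and3P pq.
rewrite qS; apply: contra nxp => xq.
by apply: connect_trans xq _; rewrite connect_ind_sym //; apply: connect1.
Qed.

End ThreeCuts.

Section Isolation.
Variables (T : finType) (e : rel T).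
Hypothesis esym : symmetric e.
Notation connb := (connb e).
Notation component := (component e).
Notation cut3 := (cut3 e).
Implicit Types (P Q : {set {set T}}) (v : T).

Lemma recomb_within_S k n P Q :
  recomb_within e k n P Q -> recomb_within e k n.+1 P Q.
Proof.
elim: n P => [|n IH] P /=; first by left.
by case=> [->|[R [mv RQ]]]; [left | right; exists R; split; last exact: IH].
Qed.

Lemma isolate_vertex k P v : conn_kpart e k P -> 2 <= k ->
  connb ([set: T] :\ v) -> ~~ cut3 (pblock P v) v ->
  exists Q, recomb_within e k 2 P Q /\ [set v] \in Q.
Proof.
move=> kP k2 cG.
have [partP _ _] := kP.
have AP := pblock_district v partP; have vA := mem_pblock_district v partP.
move: AP vA; set A := pblock P v => AP vA ncut.
have [A0|neA] := eqVneq (A :\ v) set0.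
  exists P; split; first by left.
  by rewrite -[[set v]]setU0 -A0 setD1K.
have [cA|ncA] := boolP (connb (A :\ v)).
  have [Q [mv vQ]] := isolate_one_move esym kP k2 AP vA neA cA cG.
  by exists Q; split=> //; right; exists Q; split=> //; left.
have [x xAv /forall_inPn[y yAv nxy]] := forall_inPn ncA.
have [Q1 [mv1 A'Q]] := peel_component esym kP k2 AP vA xAv cG.
set A' := A :\: component (A :\ v) x in A'Q.
have A'v : A' :\ v = A :\ v :\: component (A :\ v) x.
  by apply/setP => t; rewrite !inE; case: (t == v); rewrite ?andbF.
have vA' : v \in A'.
  by rewrite in_setD vA andbT inE negb_and in_setD1 eqxx.
have neA' : A' :\ v != set0.
  by apply/set0Pn; exists y; rewrite A'v in_setD yAv inE negb_and nxy orbT.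
have cA' : connb (A' :\ v) by rewrite A'v; apply: (noncut3_rest esym).
have [_ kQ1 _ _] := mv1.
have [Q [mv vQ]] := isolate_one_move esym kQ1 k2 A'Q vA' neA' cA' cG.
by exists Q; split=> //; right; exists Q1; split=> //; right; exists Q; split=> //; left.
Qed.

End Isolation.

Section Cut3Count.
Variables (T : finType) (e : rel T).
Hypothesis esym : symmetric e.
Notation connb := (connb e).
Notation cut3 := (cut3 e).
Implicit Types (A : {set T}) (h r : T).

Definition cut3_set A : {set T} := [set h in A | cut3 A h].
Definition nonsep_set A : {set T} := [set h in A | connb (A :\ h)].

Lemma cut3_setE A h : (h \in cut3_set A) = (h \in A) && cut3 A h.
Proof. by rewrite inE. Qed.

Lemma nonsep_setE A h : (h \in nonsep_set A) = (h \in A) && connb (A :\ h).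
Proof. by rewrite inE. Qed.

Section DeleteNonseparating.
Variables (A : {set T}) (r : T).
Hypotheses (cA : connb A) (rA : r \in A) (cAr : connb (A :\ r)) (A2 : 1 < #|A|).

Let N : {set T} := [set b in A :\ r | e r b].

Let bad : {set T} := [set h | N \subset [set h]].

Let N_neq0 : N != set0.
Proof.
have [t tAr] : exists t, t \in A :\ r.
  by apply/card_gt0P; move: A2; rewrite (cardsD1 r A) rA add1n ltnS.
have /setD1P[tr tA] := tAr.
have rX : r \in [set r] by rewrite inE.
have tX : t \notin [set r] by rewrite inE.
have [p [q [/set1P-> qX /and3P[erq _ qA]]]] := edge_across (connbP _ _ cA r t rA tA) rX tX.
by apply/set0Pn; exists q; rewrite !inE erq andbT qA andbT; rewrite inE in qX.
Qed.

Let bad_card : #|bad| <= 1.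
Proof.
have /set0Pn[b bN] := N_neq0.
apply/card_le1_eqP => h1 h2; rewrite !inE => /subsetP/(_ b bN)/set1P<-.
by move/subsetP/(_ b bN)/set1P.
Qed.

Let transfer_good h : h \in A :\ r -> h \notin bad ->
  (cut3 A h -> cut3 (A :\ r) h) /\ (connb (A :\ r :\ h) -> connb (A :\ h)).
Proof.
move=> /setD1P[hr hA]; rewrite inE => /subsetPn[b bN /set1P/eqP bh].
have [bAr erb] : b \in A :\ r /\ e r b by apply/andP; move: bN; rewrite inE.
have /setD1P[br bA] := bAr.
apply: (retract_cut3 esym (f := fun w => if w == r then b else w)) => [|w /setD1P[wh wA]].
  exact: subD1set.
case: (eqVneq w r) => [->|wr].
  split; first by rewrite !in_setD1 bh br.
  by apply: connect1; rewrite indE erb !in_setD1 bh bA eq_sym hr rA.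
by split; [rewrite !in_setD1 wh wr | apply: connect0].
Qed.

Lemma count_step :
  #|cut3_set A| + #|nonsep_set (A :\ r)| <= #|cut3_set (A :\ r)| + #|nonsep_set A|.
Proof.
have rL : r \in nonsep_set A by rewrite nonsep_setE rA cAr.
have rH : r \notin cut3_set A.
  by rewrite cut3_setE rA /=; apply: contraL cAr; apply: cut3_not_connb.
have disj : [disjoint cut3_set A & nonsep_set (A :\ r)].
  rewrite -setI_eq0 -subset0; apply/subsetP => h.
  rewrite in_setI cut3_setE nonsep_setE => /andP[/andP[_ hc]].
  by case/andP=> _ hconn; have := cut3_delete r hc; rewrite hconn.
have sub : cut3_set A :|: nonsep_set (A :\ r) \subset
           cut3_set (A :\ r) :|: (nonsep_set A :\ r) :|: bad.
  apply/subsetP => h hHL; rewrite in_setU orbC; case: (boolP (h \in bad)) => //= hgood.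
  case/setUP: hHL => [hH|hL].
    have hr : h != r by apply: contraNneq rH => <-.
    have := hH; rewrite cut3_setE => /andP[hA hc].
    have hAr : h \in A :\ r by rewrite in_setD1 hr hA.
    by rewrite in_setU cut3_setE hAr ((transfer_good hAr hgood).1 hc).
  have := hL; rewrite nonsep_setE => /andP[hAr hc].
  have /setD1P[hr hA] := hAr.
  by rewrite in_setU in_setD1 nonsep_setE hr hA ((transfer_good hAr hgood).2 hc) orbT.
have eqU : #|cut3_set A :|: nonsep_set (A :\ r)| =
           #|cut3_set A| + #|nonsep_set (A :\ r)|.
  by apply/eqP; rewrite (leq_card_setU _ _).2.
have := subset_leq_card sub; rewrite eqU => le_sub; apply: leq_trans le_sub _.
apply: leq_trans (leq_card_setU _ _).1 _.
apply: leq_trans (leq_add (leq_card_setU _ _).1 bad_card) _.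
by rewrite -addnA leq_add2l (cardsD1 r (nonsep_set A)) rL addnC.
Qed.

End DeleteNonseparating.

Lemma cut3_count A : connb A -> 1 < #|A| ->
  #|cut3_set A| + 2 <= #|nonsep_set A|.
Proof.
move=> cA A2; have [n cardA] : exists n, #|A| = n.+2.
  by exists (#|A| - 2); rewrite -addn2 subnK.
elim: n A cardA cA {A2} => [|n IH] A cardA cA.
  have small h : h \in A -> connb (A :\ h).
    by move=> hA; apply: connb_small; move: cardA; rewrite (cardsD1 h A) hA add1n => -[->].
  have -> : cut3_set A = set0.
    apply/setP => h; rewrite cut3_setE inE; apply/negbTE/nandP.
    case: (boolP (h \in A)) => hA; last by left.
    by right; apply: contraL (small h hA); apply: cut3_not_connb.
  have -> : nonsep_set A = A.
    by apply/setP => h; rewrite nonsep_setE; case: (boolP (h \in A)) => // /small.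
  by rewrite cards0 cardA.
have A2 : 1 < #|A| by rewrite cardA.
have [c [r [_ rAc nonsep]]] := nonseparating_component esym cA A2.
have cAr : connb (A :\ r) by apply: nonsep; rewrite inE rAc connect0.
have rA : r \in A by case/setD1P: rAc.
have cardAr : #|A :\ r| = n.+2 by move: cardA; rewrite (cardsD1 r A) rA => -[].
have ih := IH _ cardAr cAr; have step := count_step cA rA cAr A2.
rewrite -(leq_add2r #|nonsep_set (A :\ r)|) addnAC.
apply: leq_trans (_ : #|cut3_set (A :\ r)| + #|nonsep_set A| + 2 <= _).
  by rewrite leq_add2r.
by rewrite addnAC addnC leq_add2l.
Qed.

End Cut3Count.

Section DistrictCount.
Variables (T : finType) (e : rel T).
Hypothesis esym : symmetric e.
Notation ind := (induced_rel e).
Notation connb := (connb e).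
Notation cut3 := (cut3 e).
Variables (c : T) (U : {set T}).
Hypotheses (cU : c \notin U) (U_closed : forall y z, y \in U -> z != c -> e y z -> z \in U).
Implicit Types (D : {set T}) (u w y : T).

Let core D := D :&: (c |: U).

Let exit_through_c D w y : connect (ind D) w y -> w \in core D ->
  ~~ connect (ind (core D)) w y -> connect (ind (core D)) w c.
Proof.
move=> wy wC nwy; have [p [q [wp /setDP[qD qC] epq]]] := component_exit (subsetIl _ _) wy wC nwy.
have [pc|pc] := eqVneq p c; first by rewrite -pc.
have := connect_ind_mem wp wC; rewrite !inE (negbTE pc) /= => /andP[_ pU].
have qc : q != c by apply: contraNneq qC => qc; rewrite /core !inE qD qc eqxx.
by move: qC; rewrite !inE qD (negbTE qc) (U_closed pU qc epq).
Qed.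

Let core_connb D : connb D -> D :&: U != set0 -> connb (core D).
Proof.
move=> /connbP cD /set0Pn[u0 /setIP[u0D u0U]].
have u0C : u0 \in core D by rewrite !inE u0D u0U orbT.
apply: (connb_star esym u0C) => t tC; apply: contraT => ntu.
have tD : t \in D by case/setIP: tC.
have tc := exit_through_c (cD t u0 tD u0D) tC ntu.
have /setIP[cD' _] := connect_ind_mem tc tC.
have u0c : connect (ind (core D)) u0 c.
  apply: contraT => nuc.
  by have := exit_through_c (cD u0 c u0D cD') u0C nuc; rewrite (negbTE nuc).
have tu0 : connect (ind (core D)) t u0 by rewrite (connect_trans tc) // connect_ind_sym.
by rewrite tu0 in ntu.
Qed.

(* Every vertex of D - u (u in U) can be pushed into the core inside D - u:
   vertices outside the core are joined to c avoiding U. *)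
Let retract_to_core D u w : connb D -> u \in U -> u \in D -> w \in D :\ u ->
  let f w := if w \in core D then w else c in
  f w \in core D :\ u /\ connect (ind (D :\ u)) w (f w).
Proof.
move=> /connbP cD uU uD /setD1P[wu wD] f; rewrite /f.
have uc : u != c by apply: contraNneq cU => <-.
case: ifP => wC; first by rewrite in_setD1 wu wC connect0.
have uC : u \in core D by rewrite !inE uD uU orbT.
have nuw : ~~ connect (ind (core D)) u w by apply: contraFN wC => /connect_ind_mem; apply.
have /setIP[cD' _] := connect_ind_mem (exit_through_c (cD u w uD wD) uC nuw) uC.
split; first by rewrite in_setD1 eq_sym uc !inE cD' eqxx.
have [wU wc] : w \notin U /\ w != c.
  by move: wC; rewrite !inE wD /= => /negbT/norP[wc wU]; split.
have ZD : D :\: U \subset D :\ u.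
  by apply/subsetP => t /setDP[tD tU]; rewrite in_setD1 tD andbT; apply: contraNneq tU => ->.
apply: connect_ind_sub ZD _; apply: contraT => nwc.
have wZ : w \in D :\: U by rewrite inE wU wD.
have [p [q [wp /setDP[qD qZ] epq]]] := component_exit (subsetDl D U) (cD w c wD cD') wZ nwc.
have qU : q \in U by move: qZ; rewrite inE qD andbT negbK.
have pc : p != c by apply: contraNneq nwc => <-.
have eqp : e q p by rewrite esym.
by have /setDP[_] := connect_ind_mem wp wZ; rewrite (U_closed qU pc eqp).
Qed.

Lemma district_count D : connb D ->
  #|[set u in U :&: D | cut3 D u]| + ([set u in U :&: D | cut3 D u] != set0)
    <= #|[set u in U :&: D | ~~ cut3 D u]|.
Proof.
move=> cD; set H := [set u in U :&: D | cut3 D u].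
have [->|/set0Pn[u0 u0H]] := eqVneq H set0; first by rewrite cards0.
have := u0H; rewrite inE => /andP[/setIP[u0U u0D] cut0].
rewrite addn1.
have coreD : core D \subset D by apply: subsetIl.
have transfer u : u \in U -> u \in D ->
    (cut3 D u -> cut3 (core D) u) /\ (connb (core D :\ u) -> connb (D :\ u)).
  by move=> uU uD; apply: (retract_cut3 esym coreD) => w; apply: retract_to_core.
have cC : connb (core D) by apply: core_connb => //; apply/set0Pn; exists u0; rewrite inE u0D.
have C2 : 1 < #|core D| by exact: (cut3_card ((transfer _ u0U u0D).1 cut0)).
have count := cut3_count esym cC C2.
have HC : H \subset cut3_set e (core D).
  apply/subsetP => u uH.
  have /andP[/setIP[uU uD] cu] : (u \in U :&: D) && cut3 D u by move: uH; rewrite inE.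
  by rewrite cut3_setE !inE uD uU orbT ((transfer u uU uD).1 cu).
have LN : nonsep_set e (core D) :\ c \subset [set u in U :&: D | ~~ cut3 D u].
  apply/subsetP => u; rewrite in_setD1 nonsep_setE => /and3P[uc uC cu].
  have /setIP[uD] := uC; rewrite !inE (negbTE uc) /= => uU.
  by rewrite uU uD /=; apply: contraL ((transfer u uU uD).2 cu); apply: cut3_not_connb.
apply: leq_trans (subset_leq_card LN); rewrite -(leq_add2r 1) addn1.
apply: leq_trans (_ : #|cut3_set e (core D)| + 2 <= _).
  by rewrite addn2 !ltnS subset_leq_card.
by apply: leq_trans count _; rewrite (cardsD1 c) addnC leq_add2l leq_b1.
Qed.

End DistrictCount.

Section PartitionCount.
Variables (T : finType) (e : rel T).
Hypothesis esym : symmetric e.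
Notation cut3 := (cut3 e).
Variables (c : T) (U : {set T}).
Hypotheses (cU : c \notin U) (U_closed : forall y z, y \in U -> z != c -> e y z -> z \in U).

Lemma card_partition_sum (P : {set {set T}}) (X : {set T}) :
  partition P [set: T] -> #|X| = \sum_(D in P) #|X :&: D|.
Proof.
case/and3P => /eqP covP trP _.
rewrite -sum1_card (eq_bigl (fun x => (x \in cover P) && (x \in X))); last first.
  by move=> x; rewrite covP inE.
rewrite big_trivIset_cond //; apply: eq_bigr => D _.
by rewrite -sum1_card; apply: eq_bigl => x; rewrite inE andbC.
Qed.

Lemma partition_count k P : conn_kpart e k P ->
  #|[set u in U | cut3 (pblock P u) u]| + ([set u in U | cut3 (pblock P u) u] != set0)
   <= #|U :\: [set u in U | cut3 (pblock P u) u]|.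
Proof.
move=> [partP _ cP]; set H := [set u in U | cut3 (pblock P u) u].
have pblockE D u : D \in P -> u \in D -> pblock P u = D.
  by move=> DP uD; apply: def_pblock (partition_trivIset partP) DP uD.
have HD D : D \in P -> H :&: D = [set u in U :&: D | cut3 D u].
  move=> DP; apply/setP => u; rewrite !inE.
  case uD: (u \in D); last by rewrite !andbF.
  by rewrite (pblockE D u DP uD) !andbT.
have ND D : D \in P -> (U :\: H) :&: D = [set u in U :&: D | ~~ cut3 D u].
  move=> DP; apply/setP => u; rewrite !inE.
  case uD: (u \in D); last by rewrite !andbF.
  by rewrite (pblockE D u DP uD) !andbT; case: (u \in U); rewrite ?andbT.
rewrite (card_partition_sum H partP) (card_partition_sum (U :\: H) partP).
apply: leq_trans (_ : \sum_(D in P) (#|H :&: D| + (H :&: D != set0)) <= _).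
  rewrite big_split /= leq_add2l.
  have [->//|neH] := eqVneq H set0; have /set0Pn[u uH] := neH.
  rewrite (bigD1 (pblock P u)) ?pblock_district //=.
  apply: leq_trans (leq_addr _ _); rewrite lt0b; apply/set0Pn; exists u.
  by rewrite inE uH mem_pblock_district.
apply: leq_sum => D DP; rewrite HD // ND //.
exact: (district_count esym cU U_closed (connected_connb (cP D DP))).
Qed.

End PartitionCount.

Lemma sparse_pair (T : finType) (U H1 H2 : {set T}) : U != set0 ->
  #|H1| + (H1 != set0) <= #|U :\: H1| -> #|H2| + (H2 != set0) <= #|U :\: H2| ->
  ~~ (U \subset H1 :|: H2).
Proof.
move=> neU h1 h2; apply/negP => cover.
have half (H : {set T}) : #|H| + (H != set0) <= #|U :\: H| ->
    (#|U :&: H|).*2 + (H != set0) <= #|U|.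
  move=> h; rewrite -(cardsID H U) -addnn -addnA leq_add2l.
  by apply: leq_trans h; rewrite leq_add2r; apply/subset_leq_card/subsetIr.
have cov : #|U| <= #|U :&: H1| + #|U :&: H2|.
  apply: leq_trans (leq_card_setU _ _).1; apply: subset_leq_card.
  by rewrite -setIUr subsetIidl.
have arith (a b u : nat) (p q : bool) :
    a.*2 + p <= u -> b.*2 + q <= u -> u <= a + b -> ~~ p && ~~ q.
  move=> ha hb hu; have := leq_trans (leq_add ha hb) (leq_add hu hu).
  rewrite addnACA [X in _ <= X]addnACA !addnn -[X in _ <= X]addn0 leq_add2l leqn0.
  by rewrite addn_eq0 !eqb0.
have /andP[/negPn/eqP H10 /negPn/eqP H20] := arith _ _ _ _ _ (half H1 h1) (half H2 h2) cov.
by move: cover neU; rewrite H10 H20 setU0 subset0 => /eqP->; rewrite eqxx.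
Qed.

Lemma kpart_two_vertices (T : finType) (e : rel T) k (P : {set {set T}}) :
  conn_kpart e k P -> 2 <= k -> 1 < #|[set: T]|.
Proof.
move=> kP k2; have [partP cardP _] := kP.
have /set0Pn[A AP] : P != set0 by rewrite -card_gt0 cardP (leq_trans _ k2).
have [y yA] := exists_outside kP k2 AP.
have /set0Pn[x xA] := partition_neq0 partP AP.
by apply/card_gt1P; exists x, y; split=> //; apply: contraNneq yA => <-.
Qed.

(* A connected graph with two vertices has a nonempty set U of non-separating
   vertices, namely a component of G - c, which can be left only through c. *)
Lemma nonseparating_region (T : finType) (e : rel T) : symmetric e ->
  connb e [set: T] -> 1 < #|[set: T]| ->
  exists c (U : {set T}), [/\ c \notin U, U != set0,
    forall y z, y \in U -> z != c -> e y z -> z \in U &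
    forall u, u \in U -> connb e ([set: T] :\ u)].
Proof.
move=> esym cT T2; have [c [x0 [_ x0c nonsep]]] := nonseparating_component esym cT T2.
exists c, (component e ([set: T] :\ c) x0); split=> //; first by rewrite !inE eqxx.
  by apply/set0Pn; exists x0; rewrite inE x0c connect0.
move=> y z yU zc eyz; apply: (component_closed yU).
have := yU; rewrite inE => /andP[/setD1P[yc _] _].
by rewrite indE eyz !in_setD1 zc yc !in_setT.
Qed.

Theorem mainTheorem2 (T : finType) (e : rel T) (k : nat)
  (P1 P2 : {set {set T}}) :
  simple_graph e -> connected_graph e -> 2 <= k ->
  conn_kpart e k P1 -> conn_kpart e k P2 ->
  exists v : T, block_vertex e v /\
    (exists Q1, recomb_within e k 3 P1 Q1 /\ [set v] \in Q1) /\
    (exists Q2, recomb_within e k 3 P2 Q2 /\ [set v] \in Q2).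
Proof.
move=> [esym _] cG k2 kP1 kP2.
have [c [U [cU neU U_closed nonsep]]] :=
  nonseparating_region esym (connected_connb cG) (kpart_two_vertices kP1 k2).
(* a vertex of U that is a 3-cut of its district in neither partition *)
have := sparse_pair neU (partition_count esym cU U_closed kP1)
                        (partition_count esym cU U_closed kP2).
case/subsetPn=> v vU; rewrite in_setU negb_or => /andP[nH1 nH2].
have isolate P : conn_kpart e k P -> v \notin [set u in U | cut3 e (pblock P u) u] ->
    exists Q, recomb_within e k 3 P Q /\ [set v] \in Q.
  move=> kP; rewrite inE vU => ncut.
  have [Q [mv vQ]] := isolate_vertex esym kP k2 (nonsep v vU) ncut.
  by exists Q; split=> //; apply: recomb_within_S.
exists v; split; first exact: (nonseparating_block_vertex esym (nonsep v vU)).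
by split; apply: isolate.
Qed.
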